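(* Let $Q$ be a supported quantale with base locale $Q_0$ and support $\varsigma$. The following are equivalent: (1) $\varsigma(xy)\le\varsigma(x)$ for all $x,y\in Q$; (2) $\varsigma(x1_Q)=\varsigma(x)$ for all $x\in Q$; (3) $\varsigma(xy)=\varsigma(x\triangleleft\varsigma(y))$ for all $x,y\in Q$.
   Context: For a locale $A$, an $A$-$A$-bimodule is a sup-lattice $M$ with actions $a\triangleright m$, $m\triangleleft a$ preserving joins in each variable, with $1_A\triangleright m=m$, $(a\wedge b)\triangleright m=a\triangleright(b\triangleright m)$, $m\triangleleft1_A=m$, $m\triangleleft(a\wedge b)=(m\triangleleft a)\triangleleft b$, $(a\triangleright m)\triangleleft b=a\triangleright(m\triangleleft b)$. An $A$-$A$-quantale is such a $Q$ with associative join-preserving multiplication and $(a\triangleright x)y=a\triangleright(xy)$, $(x\triangleleft a)y=x(a\triangleright y)$, $(xy)\triangleleft a=x(y\triangleleft a)$; involutive if there is a join-preserving $x\mapsto x^*$ with $x^{**}=x$, $(xy)^*=y^*x^*$, $(a\triangleright(x\triangleleft b))^*=b\triangleright(x^*\triangleleft a)$. A based quantale is an involutive $Q_0$-$Q_0$-quantale for a locale $Q_0$; $1_Q$ is its top. A supported quantale is a based quantale with a support, i.e. a join-preserving $\varsigma:Q\to Q_0$ with $\varsigma(1_Q)=1_{Q_0}$, $\varsigma(x)\triangleright y\le xx^*y$ and $\varsigma(x)\triangleright x=x$ for all $x,y\in Q$. *)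

Set Implicit Arguments.

Definition img {X Y : Type} (f : X -> Y) (S : X -> Prop) : Y -> Prop :=
  fun y => exists x, S x /\ y = f x.

Record SupLat := {
  sl_car :> Type;
  sl_le : sl_car -> sl_car -> Prop;
  sl_le_refl : forall x, sl_le x x;
  sl_le_trans : forall x y z, sl_le x y -> sl_le y z -> sl_le x z;
  sl_le_antisym : forall x y, sl_le x y -> sl_le y x -> x = y;
  sl_sup : (sl_car -> Prop) -> sl_car;
  sl_sup_ub : forall S x, S x -> sl_le x (sl_sup S);
  sl_sup_least : forall S u, (forall x, S x -> sl_le x u) -> sl_le (sl_sup S) u
}.

Arguments sl_le {s} _ _.
Arguments sl_sup {s} _.

Definition sl_top (L : SupLat) : L := sl_sup (fun _ : L => True).

Definition join_pres (L M : SupLat) (f : L -> M) : Prop :=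
  forall S : L -> Prop, f (sl_sup S) = sl_sup (img f S).

Record Locale := {
  loc_sl :> SupLat;
  loc_meet : loc_sl -> loc_sl -> loc_sl;
  loc_meet_l : forall a b, sl_le (loc_meet a b) a;
  loc_meet_r : forall a b, sl_le (loc_meet a b) b;
  loc_meet_glb : forall a b c, sl_le c a -> sl_le c b -> sl_le c (loc_meet a b);
  loc_distr : forall a (S : loc_sl -> Prop),
      loc_meet a (sl_sup S) = sl_sup (img (loc_meet a) S)
}.

Arguments loc_meet {_} _ _.

Record SupportedQuantale (A : Locale) := {
  sq_Q :> SupLat;
  lact : A -> sq_Q -> sq_Q;
  ract : sq_Q -> A -> sq_Q;
  lact_jp_l : forall m, @join_pres A sq_Q (fun a : A => lact a m);
  lact_jp_r : forall a, @join_pres sq_Q sq_Q (lact a);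
  ract_jp_l : forall a, @join_pres sq_Q sq_Q (fun m : sq_Q => ract m a);
  ract_jp_r : forall m, @join_pres A sq_Q (ract m);
  lact_one : forall m, lact (sl_top A) m = m;
  lact_meet : forall (a b : A) m, lact (loc_meet a b) m = lact a (lact b m);
  ract_one : forall m, ract m (sl_top A) = m;
  ract_meet : forall (a b : A) m, ract m (loc_meet a b) = ract (ract m a) b;
  lact_ract : forall (a b : A) m, ract (lact a m) b = lact a (ract m b);
  mul : sq_Q -> sq_Q -> sq_Q;
  mul_assoc : forall x y z, mul (mul x y) z = mul x (mul y z);
  mul_jp_l : forall y, @join_pres sq_Q sq_Q (fun x : sq_Q => mul x y);
  mul_jp_r : forall x, @join_pres sq_Q sq_Q (mul x);
  lact_mul : forall (a : A) x y, mul (lact a x) y = lact a (mul x y);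
  ract_mul : forall (a : A) x y, mul (ract x a) y = mul x (lact a y);
  mul_ract : forall (a : A) x y, ract (mul x y) a = mul x (ract y a);
  inv : sq_Q -> sq_Q;
  inv_jp : @join_pres sq_Q sq_Q inv;
  inv_inv : forall x, inv (inv x) = x;
  inv_mul : forall x y, inv (mul x y) = mul (inv y) (inv x);
  inv_act : forall (a b : A) x, inv (lact a (ract x b)) = lact b (ract (inv x) a);
  supp : sq_Q -> A;
  supp_jp : @join_pres sq_Q A supp;
  supp_top : supp (sl_top sq_Q) = sl_top A;
  supp_le : forall x y, sl_le (lact (supp x) y) (mul (mul x (inv x)) y);
  supp_act : forall x, lact (supp x) x = x
}.

Arguments lact {A s} _ _.
Arguments ract {A s} _ _.
Arguments mul {A s} _ _.
Arguments inv {A s} _.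
Arguments supp {A s} _.

(* Two inequalities drive the proof: [x <= x 1], because
   [x = supp x |> x <= x x^* x], and [x <| supp y <= (x y)(y^* 1)], because
   [supp y |> 1 <= y y^* 1].  Combined with [(x <| supp y) y = x y] and
   [supp 1 = 1], they make the three conditions equivalent. *)
Set Implicit Arguments.

Lemma join_pres_le (L M : SupLat) (f : L -> M) :
  @join_pres L M f -> forall x y : L, sl_le x y -> sl_le (f x) (f y).
Proof.
  intros f_jp x y le_xy.
  set (xy := fun z : L => z = x \/ z = y).
  assert (sup_xy : sl_sup xy = y).
  { apply sl_le_antisym.
    - apply sl_sup_least. intros z [-> | ->]; [exact le_xy | apply sl_le_refl].
    - apply sl_sup_ub. now right. }
  rewrite <- sup_xy, (f_jp xy). apply sl_sup_ub. exists x. split; [now left | reflexivity].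
Qed.

Lemma sl_le_top (L : SupLat) (x : L) : sl_le x (sl_top L).
Proof. now apply sl_sup_ub. Qed.

Section SupportedQuantaleTheory.
Variables (A : Locale) (Q : SupportedQuantale A).

Notation top := (sl_top Q).

Lemma mul_le_r (x y z : Q) : sl_le y z -> sl_le (mul x y) (mul x z).
Proof. apply join_pres_le, mul_jp_r. Qed.

Lemma supp_le_supp (x y : Q) : sl_le x y -> sl_le (supp x) (supp y).
Proof. apply join_pres_le, supp_jp. Qed.

Lemma le_mul_top (x : Q) : sl_le x (mul x top).
Proof.
  apply sl_le_trans with (mul x (mul (inv x) x)); [| apply mul_le_r, sl_le_top].
  rewrite <- mul_assoc. generalize (supp_le Q x x). now rewrite supp_act.
Qed.

Lemma mul_ract_supp (x y : Q) : mul (ract x (supp y)) y = mul x y.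
Proof. now rewrite ract_mul, supp_act. Qed.

Lemma ract_supp_le_mul (x y : Q) :
  sl_le (ract x (supp y)) (mul (mul x y) (mul (inv y) top)).
Proof.
  apply sl_le_trans with (mul (ract x (supp y)) top); [apply le_mul_top |].
  rewrite ract_mul, mul_assoc. apply mul_le_r.
  rewrite <- mul_assoc. apply supp_le.
Qed.

Lemma supp_mul_top_of_supp_mul_le :
  (forall x y : Q, sl_le (supp (mul x y)) (supp x)) ->
  forall x : Q, supp (mul x top) = supp x.
Proof.
  intros supp_mul x. apply sl_le_antisym; [apply supp_mul |].
  apply supp_le_supp, le_mul_top.
Qed.

Lemma supp_mul_le_of_supp_mul_top :
  (forall x : Q, supp (mul x top) = supp x) ->
  forall x y : Q, sl_le (supp (mul x y)) (supp x).
Proof.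
  intros supp_mul_top x y. rewrite <- (supp_mul_top x).
  apply supp_le_supp, mul_le_r, sl_le_top.
Qed.

Lemma supp_mul_ract_of_supp_mul_le :
  (forall x y : Q, sl_le (supp (mul x y)) (supp x)) ->
  forall x y : Q, supp (mul x y) = supp (ract x (supp y)).
Proof.
  intros supp_mul x y. apply sl_le_antisym.
  - rewrite <- mul_ract_supp. apply supp_mul.
  - eapply sl_le_trans; [apply supp_le_supp, ract_supp_le_mul | apply supp_mul].
Qed.

Lemma supp_mul_top_of_supp_mul_ract :
  (forall x y : Q, supp (mul x y) = supp (ract x (supp y))) ->
  forall x : Q, supp (mul x top) = supp x.
Proof. intros supp_mul x. now rewrite supp_mul, supp_top, ract_one. Qed.

End SupportedQuantaleTheory.

Theorem lemma3p15 (A : Locale) (Q : SupportedQuantale A) :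
  ((forall x y : Q, sl_le (supp (mul x y)) (supp x)) <->
   (forall x : Q, supp (mul x (sl_top Q)) = supp x)) /\
  ((forall x : Q, supp (mul x (sl_top Q)) = supp x) <->
   (forall x y : Q, supp (mul x y) = supp (ract x (supp y)))).
Proof.
  split; split.
  - apply supp_mul_top_of_supp_mul_le.
  - apply supp_mul_le_of_supp_mul_top.
  - intro supp_mul_top.
    apply supp_mul_ract_of_supp_mul_le, supp_mul_le_of_supp_mul_top, supp_mul_top.
  - apply supp_mul_top_of_supp_mul_ract.
Qed.
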